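(* Let $q\in\mathrm{prob}(\{0,1\}^2)$. The set $A:=\{(\pi_1,\chi^{(1)}_{0|0},\chi^{(1)}_{1|1},\chi^{(2)}_{0|0},\chi^{(2)}_{1|1}):(\pi,\chi)\in\Theta_2,\ \mu(\pi,\chi)=q\}$ is nonempty and equals the set of all $(\mathrm{Pr},\mathrm{Sp}_1,\mathrm{Se}_1,\mathrm{Sp}_2,\mathrm{Se}_2)\in[0,1]^5$ satisfying (a) $(1-\mathrm{Pr})(1-\mathrm{Sp}_1)+\mathrm{Pr}\,\mathrm{Se}_1=q_{1+}$, (b) $(1-\mathrm{Pr})(1-\mathrm{Sp}_2)+\mathrm{Pr}\,\mathrm{Se}_2=q_{+1}$, (c) $(1-\mathrm{Pr})\min\{\mathrm{Sp}_1,\mathrm{Sp}_2\}+\mathrm{Pr}\,(1-\max\{\mathrm{Se}_1,\mathrm{Se}_2\})\ge q_{00}$, (d) $(1-\mathrm{Pr})(\mathrm{Sp}_1+\mathrm{Sp}_2-1)^++\mathrm{Pr}\,(1-\mathrm{Se}_1-\mathrm{Se}_2)^+\le q_{00}$; equivalently, the set of all such quintuples in $[0,1]^5$ satisfying (e) $\mathrm{Pr}(\mathrm{Se}_2-\mathrm{Se}_1)=(1-\mathrm{Pr})(\mathrm{Sp}_2-\mathrm{Sp}_1)+q_{01}-q_{10}$, (f) $\mathrm{Pr}(\mathrm{Se}_1+\mathrm{Se}_2-1)=(1-\mathrm{Pr})(\mathrm{Sp}_1+\mathrm{Sp}_2-1)+q_{11}-q_{00}$, (g) $-q_{10}\le\mathrm{Pr}(\mathrm{Se}_2-\mathrm{Se}_1)\le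 q_{01}$, (h) $-q_{00}\le\mathrm{Pr}(\mathrm{Se}_1+\mathrm{Se}_2-1)\le q_{11}$.
   Context: $x^+:=\max\{x,0\}$. A subscript $+$ denotes summation over the replaced index, e.g. $q_{1+}=q_{10}+q_{11}$, $q_{+1}=q_{01}+q_{11}$. $\mathrm{prob}(\mathcal{X})$ is the set of probability densities on a finite set $\mathcal{X}$; $\mathrm{markov}(\mathcal{X},\mathcal{Y})$ the set of maps $(x,y)\mapsto p_{y|x}$ with $p_{\cdot|x}\in\mathrm{prob}(\mathcal{Y})$. $\Theta_2:=\mathrm{prob}(\{0,1\})\times\mathrm{markov}(\{0,1\},\{0,1\}^2)$, $\mu(\pi,\chi)_j:=\sum_{i=0}^1\pi_i\chi_{j|i}$ for $j\in\{0,1\}^2$, $\chi^{(1)}_{\iota|i}:=\chi_{\iota0|i}+\chi_{\iota1|i}$, $\chi^{(2)}_{\iota|i}:=\chi_{0\iota|i}+\chi_{1\iota|i}$. *)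

(* R : realFieldType. Index 0 = false, 1 = true. *)
From HB Require Import structures.
From mathcomp Require Import all_boot all_order all_algebra.
Set Implicit Arguments. Unset Strict Implicit. Unset Printing Implicit Defensive.
Import Order.TTheory GRing.Theory Num.Theory.
Local Open Scope ring_scope.

Definition is_prob (R : realFieldType) (X : finType) (p : X -> R) : Prop :=
  (forall x, 0 <= p x) /\ \sum_(x : X) p x = 1.

Definition is_markov (R : realFieldType) (X Y : finType) (p : X -> Y -> R) : Prop :=
  forall x, is_prob (p x).

Definition pos_part (R : realFieldType) (x : R) : R := Num.max x 0.

Definition mu (R : realFieldType) (pi : bool -> R) (chi : bool -> bool * bool -> R)
  (j : bool * bool) : R := \sum_(i : bool) pi i * chi i j.

Definition chi1 (R : realFieldType) (chi : bool -> bool * bool -> R) (iota i : bool) : R :=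
  chi i (iota, false) + chi i (iota, true).
Definition chi2 (R : realFieldType) (chi : bool -> bool * bool -> R) (iota i : bool) : R :=
  chi i (false, iota) + chi i (true, iota).

Definition inA (R : realFieldType) (q : bool * bool -> R) (Pr Sp1 Se1 Sp2 Se2 : R) : Prop :=
  exists (pi : bool -> R) (chi : bool -> bool * bool -> R),
    is_prob pi /\ is_markov chi /\ (forall j, mu pi chi j = q j) /\
    Pr = pi true /\ Sp1 = chi1 chi false false /\ Se1 = chi1 chi true true /\
    Sp2 = chi2 chi false false /\ Se2 = chi2 chi true true.

Definition in01 (R : realFieldType) (x : R) : Prop := 0 <= x <= 1.

(* A point of A is given by two 2x2 densities chi_{.|0} and chi_{.|1}, mixed with
   weights 1 - Pr and Pr to give q.  A 2x2 density with marginals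
   P(j.1 = 0) = a and P(j.2 = 0) = b is determined by its (0,0) cell r, and it is
   nonnegative exactly when r satisfies the Frechet bounds
   (a + b - 1)^+ <= r <= min(a, b).  Here (a, b) is (Sp1, Sp2) for the first row
   and (1 - Se1, 1 - Se2) for the second.  The marginals of q give (a) and (b),
   and q_00 = (1 - Pr) r + Pr s is attainable exactly when q_00 lies between the
   combined lower and upper Frechet bounds, which is (c) and (d).  Splitting the
   min, max and positive parts into their linear pieces turns (a)-(d) into
   (e)-(h). *)
From HB Require Import structures.
From mathcomp Require Import all_boot all_order all_algebra.
From mathcomp Require Import ring lra.
Import Order.TTheory GRing.Theory Num.Theory.
Set Implicit Arguments. Unset Strict Implicit. Unset Printing Implicit Defensive.
Local Open Scope ring_scope.

Section FrechetBounds.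
Variable R : realFieldType.
Implicit Types a b c d r t x y alpha beta lo hi : R.

Lemma sum_bool2 (f : bool * bool -> R) :
  \sum_j f j = f (false, false) + f (false, true) + f (true, false) + f (true, true).
Proof.
rewrite (eq_bigr (fun j => f (j.1, j.2))); last by case.
by rewrite -(pair_bigA _ (fun i j => f (i, j))) /= !big_bool /=; lra.
Qed.

Lemma eq_is_prob (X : finType) (p p' : X -> R) : p =1 p' -> is_prob p -> is_prob p'.
Proof.
move=> e [p_ge0 p_sum]; split=> [x|]; first by rewrite -e.
by rewrite -(eq_bigr _ (fun i _ => e i)).
Qed.

Definition frechet_bounds a b r : bool := pos_part (a + b - 1) <= r <= Num.min a b.

Definition table2 a b r (j : bool * bool) : R :=
  match j with
  | (false, false) => r
  | (false, true) => a - r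
  | (true, false) => b - r
  | (true, true) => 1 - a - b + r
  end.

Lemma table2E (p : bool * bool -> R) : \sum_j p j = 1 ->
  p =1 table2 (p (false, false) + p (false, true))
              (p (false, false) + p (true, false)) (p (false, false)).
Proof. by rewrite sum_bool2 => p_sum [[] []] /=; lra. Qed.

Lemma is_prob_table2P a b r : is_prob (table2 a b r) <-> frechet_bounds a b r.
Proof.
rewrite /is_prob /frechet_bounds /pos_part sum_bool2 ge_max le_min /=.
split=> [[p_ge0 _] | /andP [/andP [? ?] /andP [? ?]]].
  have := p_ge0 (false, false); have := p_ge0 (false, true).
  have := p_ge0 (true, false); have := p_ge0 (true, true) => /= *.
  by apply/andP; split; apply/andP; split; lra.
by split=> [[[] []] /= |]; lra.
Qed.

Lemma frechet_bounds_in01 a b r : frechet_bounds a b r -> in01 a /\ in01 b.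
Proof.
rewrite /frechet_bounds /pos_part ge_max le_min /in01.
by case/andP=> /andP [? ?] /andP [? ?]; split; apply/andP; split; lra.
Qed.

Lemma frechet_bounds_nonempty a b :
  in01 a -> in01 b -> pos_part (a + b - 1) <= Num.min a b.
Proof.
rewrite /in01 /pos_part ge_max !le_min => /andP [? ?] /andP [? ?].
by apply/andP; split; apply/andP; split; lra.
Qed.

Lemma in01_onem x : in01 (1 - x) <-> in01 x.
Proof. by rewrite /in01; split=> /andP [? ?]; apply/andP; split; lra. Qed.

Lemma interpolation_weight lo hi t :
  lo <= t <= hi -> exists2 l : R, 0 <= l <= 1 & t = lo + l * (hi - lo).
Proof.
move=> /andP [hlo hhi]; have [eq_hl | ne_hl] := eqVneq hi lo.
  by exists 0; [rewrite lexx ler01 | lra].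
have hl_gt0 : 0 < hi - lo by rewrite subr_gt0 lt_neqAle eq_sym ne_hl (le_trans hlo).
exists ((t - lo) / (hi - lo)); last by rewrite divfK ?gt_eqF //; ring.
apply/andP; split; first by apply: divr_ge0; lra.
by rewrite ler_pdivrMr // mul1r; lra.
Qed.

Lemma combination_in_boxesP alpha beta (lo1 hi1 lo2 hi2 : R) t :
  0 <= alpha -> 0 <= beta -> lo1 <= hi1 -> lo2 <= hi2 ->
  (exists r s, [/\ lo1 <= r <= hi1, lo2 <= s <= hi2 & alpha * r + beta * s = t]) <->
  alpha * lo1 + beta * lo2 <= t <= alpha * hi1 + beta * hi2.
Proof.
move=> ha hb h1 h2; split.
  move=> [r [s [/andP [r1 r2] /andP [s1 s2] <-]]].
  by apply/andP; split; apply: lerD; apply: ler_wpM2l.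
case/interpolation_weight=> l /andP [l0 l1] ->.
exists (lo1 + l * (hi1 - lo1)), (lo2 + l * (hi2 - lo2)); split; last by ring.
- by apply/andP; split; nra.
- by apply/andP; split; nra.
Qed.

Lemma subr_max a b c : a - Num.max b c = Num.min (a - b) (a - c).
Proof. by rewrite oppr_max addr_minr. Qed.

Lemma le_comb_min alpha beta a b c d t : 0 <= alpha -> 0 <= beta ->
  (t <= alpha * Num.min a b + beta * Num.min c d) =
  [&& t <= alpha * a + beta * c, t <= alpha * a + beta * d,
      t <= alpha * b + beta * c & t <= alpha * b + beta * d].
Proof.
move=> ha hb; rewrite minr_pMr // minr_pMr // addr_minl !addr_minr !le_min.
by rewrite !andbA.
Qed.

Lemma ge_comb_pos_part alpha beta x y t : 0 <= alpha -> 0 <= beta ->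
  (alpha * pos_part x + beta * pos_part y <= t) =
  [&& alpha * x + beta * y <= t, alpha * x <= t, beta * y <= t & 0 <= t].
Proof.
move=> ha hb; rewrite /pos_part maxr_pMr // maxr_pMr // !mulr0.
by rewrite addr_maxl !addr_maxr !ge_max !add0r !addr0 !andbA.
Qed.

End FrechetBounds.

Section Identification.
Variable R : realFieldType.
Variable q : bool * bool -> R.

Lemma inA_table2P (P Sp1 Se1 Sp2 Se2 : R) :
  inA q P Sp1 Se1 Sp2 Se2 <->
  exists r s, [/\ in01 P, is_prob (table2 Sp1 Sp2 r),
    is_prob (table2 (1 - Se1) (1 - Se2) s) &
    forall j, q j = (1 - P) * table2 Sp1 Sp2 r j + P * table2 (1 - Se1) (1 - Se2) s j].
Proof.
split.
  move=> [pi [chi [[pi_ge0 pi_sum] [chi_prob [hmu [-> [-> [-> [-> ->]]]]]]]]].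
  rewrite big_bool /= in pi_sum.
  have chiE i := table2E (chi_prob i).2.
  have [-> ->] : 1 - chi1 chi true true = chi1 chi false true /\
                 1 - chi2 chi true true = chi2 chi false true.
    by move: (chi_prob true).2; rewrite sum_bool2 /chi1 /chi2; split; lra.
  exists (chi false (false, false)), (chi true (false, false)); split.
  - by rewrite /in01; have := pi_ge0 false; have := pi_ge0 true => *; lra.
  - exact: eq_is_prob (chiE false) (chi_prob false).
  - exact: eq_is_prob (chiE true) (chi_prob true).
  - move=> j; rewrite -hmu /mu big_bool /= -(chiE true) -(chiE false).
    have -> : pi false = 1 - pi true by lra.
    by rewrite addrC.
move=> [r [s [P01 hr hs hq]]].
exists (fun i => if i then P else 1 - P).
exists (fun i => if i then table2 (1 - Se1) (1 - Se2) s else table2 Sp1 Sp2 r).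
split; first by split=> [[] | ]; rewrite ?big_bool /=; move: P01; rewrite /in01; lra.
split; first by case.
split; first by move=> j; rewrite /mu big_bool /= hq; ring.
by rewrite /chi1 /chi2 /=; do !split; ring.
Qed.

Lemma inA_nonempty : is_prob q -> exists P Sp1 Se1 Sp2 Se2, inA q P Sp1 Se1 Sp2 Se2.
Proof.
move=> q_prob; pose chi (_ : bool) := q.
exists 0, (chi1 chi false false), (chi1 chi true true),
       (chi2 chi false false), (chi2 chi true true).
exists (fun i : bool => if i then 0 else 1), chi.
split; first by split=> [[] | ]; rewrite ?big_bool /=; lra.
split; first by [].
by split=> // j; rewrite /mu big_bool /= mul0r mul1r add0r.
Qed.

Lemma inA_boundsP (P Sp1 Se1 Sp2 Se2 : R) : is_prob q ->
  inA q P Sp1 Se1 Sp2 Se2 <->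
  [/\ in01 P, in01 Sp1, in01 Se1, in01 Sp2 & in01 Se2] /\
  [/\ (1 - P) * (1 - Sp1) + P * Se1 = q (true, false) + q (true, true),
      (1 - P) * (1 - Sp2) + P * Se2 = q (false, true) + q (true, true),
      (1 - P) * Num.min Sp1 Sp2 + P * (1 - Num.max Se1 Se2) >= q (false, false) &
      (1 - P) * pos_part (Sp1 + Sp2 - 1) + P * pos_part (1 - Se1 - Se2)
        <= q (false, false)].
Proof.
move=> [q_ge0]; rewrite sum_bool2 => q_sum.
rewrite inA_table2P subr_max.
have -> : 1 - Se1 - Se2 = (1 - Se1) + (1 - Se2) - 1 by ring.
split.
  case=> r [s [P01 /is_prob_table2P hr /is_prob_table2P hs hq]].
  have [Sp1_01 Sp2_01] := frechet_bounds_in01 hr.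
  have [Se1'_01 Se2'_01] := frechet_bounds_in01 hs.
  have P_ge0 : 0 <= P by case/andP: P01.
  have P'_ge0 : 0 <= 1 - P by case/andP: P01 => _; rewrite subr_ge0.
  have /andP [hd hc] := (combination_in_boxesP (q (false, false)) P'_ge0 P_ge0
    (frechet_bounds_nonempty Sp1_01 Sp2_01)
    (frechet_bounds_nonempty Se1'_01 Se2'_01)).1
    (ex_intro _ r (ex_intro _ s (And3 hr hs (esym (hq (false, false)))))).
  split; first by split=> //; apply/in01_onem.
  by split=> //; rewrite ?(hq (true, false)) ?(hq (false, true)) (hq (true, true)) /=; ring.
case=> [[P01 Sp1_01 Se1_01 Sp2_01 Se2_01] [ha hb hc hd]].
have P_ge0 : 0 <= P by case/andP: P01.
have P'_ge0 : 0 <= 1 - P by case/andP: P01 => _; rewrite subr_ge0.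
move/in01_onem in Se1_01; move/in01_onem in Se2_01.
have [r [s [hr hs hrs]]] := (combination_in_boxesP (q (false, false)) P'_ge0 P_ge0
  (frechet_bounds_nonempty Sp1_01 Sp2_01)
  (frechet_bounds_nonempty Se1_01 Se2_01)).2 (introT andP (conj hd hc)).
exists r, s; split=> //; try exact/is_prob_table2P.
by case=> [[] []] /=; lra.
Qed.

Lemma bounds_linearP (P Sp1 Se1 Sp2 Se2 : R) : is_prob q -> in01 P ->
  [/\ (1 - P) * (1 - Sp1) + P * Se1 = q (true, false) + q (true, true),
      (1 - P) * (1 - Sp2) + P * Se2 = q (false, true) + q (true, true),
      (1 - P) * Num.min Sp1 Sp2 + P * (1 - Num.max Se1 Se2) >= q (false, false) &
      (1 - P) * pos_part (Sp1 + Sp2 - 1) + P * pos_part (1 - Se1 - Se2)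
        <= q (false, false)] <->
  [/\ P * (Se2 - Se1) = (1 - P) * (Sp2 - Sp1) + q (false, true) - q (true, false),
      P * (Se1 + Se2 - 1) = (1 - P) * (Sp1 + Sp2 - 1) + q (true, true) - q (false, false),
      - q (true, false) <= P * (Se2 - Se1) <= q (false, true) &
      - q (false, false) <= P * (Se1 + Se2 - 1) <= q (true, true)].
Proof.
move=> [q_ge0]; rewrite sum_bool2 => q_sum /andP [P_ge0 P_le1].
have P'_ge0 : 0 <= 1 - P by rewrite subr_ge0.
have := q_ge0 (false, false); have := q_ge0 (false, true).
have := q_ge0 (true, false); have := q_ge0 (true, true) => *.
rewrite subr_max le_comb_min // ge_comb_pos_part //.
split=> [[ha hb /and4P [c1 c2 c3 c4] /and4P [d1 d2 d3 d4]] |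
         [he hf /andP [g1 g2] /andP [h1 h2]]].
  by split; [lra | lra | apply/andP; split; lra | apply/andP; split; lra].
by split; [lra | lra | apply/and4P; split; lra | apply/and4P; split; lra].
Qed.

End Identification.

Theorem lemma3 (R : realFieldType) (q : bool * bool -> R) :
  is_prob q ->
  let q00 := q (false, false) in let q01 := q (false, true) in
  let q10 := q (true, false) in let q11 := q (true, true) in
  let q1p := q10 + q11 in let qp1 := q01 + q11 in
  (exists Pr Sp1 Se1 Sp2 Se2 : R, inA q Pr Sp1 Se1 Sp2 Se2) /\
  (forall Pr Sp1 Se1 Sp2 Se2 : R,
     inA q Pr Sp1 Se1 Sp2 Se2 <->
     [/\ in01 Pr, in01 Sp1, in01 Se1, in01 Sp2 & in01 Se2] /\
     [/\ (1 - Pr) * (1 - Sp1) + Pr * Se1 = q1p,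
         (1 - Pr) * (1 - Sp2) + Pr * Se2 = qp1,
         (1 - Pr) * Num.min Sp1 Sp2 + Pr * (1 - Num.max Se1 Se2) >= q00 &
         (1 - Pr) * pos_part (Sp1 + Sp2 - 1) + Pr * pos_part (1 - Se1 - Se2) <= q00]) /\
  (forall Pr Sp1 Se1 Sp2 Se2 : R,
     inA q Pr Sp1 Se1 Sp2 Se2 <->
     [/\ in01 Pr, in01 Sp1, in01 Se1, in01 Sp2 & in01 Se2] /\
     [/\ Pr * (Se2 - Se1) = (1 - Pr) * (Sp2 - Sp1) + q01 - q10,
         Pr * (Se1 + Se2 - 1) = (1 - Pr) * (Sp1 + Sp2 - 1) + q11 - q00,
         - q10 <= Pr * (Se2 - Se1) <= q01 &
         - q00 <= Pr * (Se1 + Se2 - 1) <= q11]).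
Proof.
move=> q_prob /=; split; first exact: inA_nonempty.
split=> P Sp1 Se1 Sp2 Se2; rewrite inA_boundsP //.
by split=> -[in01s hbounds]; split=> //; case: in01s => P01 *;
  apply/(bounds_linearP _ _ _ _ q_prob P01).
Qed.
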